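(* For every sequent $\Gamma\Rightarrow\Delta$: if $\Gamma\Rightarrow\Delta$ is provable in $\mathsf{Grz}_\infty$, then $\mathsf{Grz_{Seq}}\vdash\Gamma\Rightarrow\Delta$.
   Context: Formulas are built from $\bot$ and atomic propositions using $\to$ and $\Box$. A sequent is $\Gamma\Rightarrow\Delta$ with $\Gamma,\Delta$ finite multisets of formulas; $\Box\Pi$ denotes the multiset $\{\Box B:B\in\Pi\}$. Common rules: $(\to_L)$ from $\Gamma,B\Rightarrow\Delta$ and $\Gamma\Rightarrow A,\Delta$ infer $\Gamma,A\to B\Rightarrow\Delta$; $(\to_R)$ from $\Gamma,A\Rightarrow B,\Delta$ infer $\Gamma\Rightarrow A\to B,\Delta$; $(\mathsf{refl})$ from $\Gamma,B,\Box B\Rightarrow\Delta$ infer $\Gamma,\Box B\Rightarrow\Delta$. The finite-proof calculus $\mathsf{Grz_{Seq}}$ has initial sequents $\Gamma,A\Rightarrow A,\Delta$ (any $A$) and $\Gamma,\bot\Rightarrow\Delta$, the rules $(\to_L),(\to_R),(\mathsf{refl})$ and $(\Box_{\mathsf{Grz}})$: from $\Box\Pi,\Box(A\to\Box A)\Rightarrow A$ infer $\Gamma,\Box\Pi\Rightarrow\Box A,\Delta$. The calculus $\mathsf{Grz}_\infty$ has initial sequents $\Gamma,p\Rightarrow p,\Delta$ ($p$ atomic) and $\Gamma,\bot\Rightarrow\Delta$, the rules $(\to_L),(\to_R),(\mathsf{refl})$ and $(\Box)$: from left premise $\Gamma,\Box\Pi\Rightarrow A,\Delta$ and right premise $\Box\Pi\Rightarrow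 A$ infer $\Gamma,\Box\Pi\Rightarrow\Box A,\Delta$. Proofs in $\mathsf{Grz}_\infty$ are $\infty$-proofs: possibly infinite trees of sequents built by these rules, with leaves labelled by initial sequents, in which every infinite branch passes through a right premise of $(\Box)$ infinitely often; a sequent is provable if it labels the root of an $\infty$-proof. *)

(* Sequents are pairs of lists; multisets are lists up to Permutation. *)
From Stdlib Require Import List Permutation.
Import ListNotations.

Inductive form : Type :=
| Bot : form
| Var : nat -> form
| Imp : form -> form -> form
| Box : form -> form.

Definition sequent := (list form * list form)%type.

Definition boxes (Pi : list form) : list form := map Box Pi.

Inductive GrzSeq : list form -> list form -> Prop :=
| gs_init : forall G D G' D' A,
    Permutation G (A :: G') -> Permutation D (A :: D') -> GrzSeq G D
| gs_bot : forall G D G',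
    Permutation G (Bot :: G') -> GrzSeq G D
| gs_impL : forall G D G' A B,
    Permutation G (Imp A B :: G') ->
    GrzSeq (B :: G') D -> GrzSeq G' (A :: D) -> GrzSeq G D
| gs_impR : forall G D D' A B,
    Permutation D (Imp A B :: D') ->
    GrzSeq (A :: G) (B :: D') -> GrzSeq G D
| gs_refl : forall G D G' B,
    Permutation G (Box B :: G') ->
    GrzSeq (B :: Box B :: G') D -> GrzSeq G D
| gs_boxGrz : forall G D G' D' Pi A,
    Permutation G (boxes Pi ++ G') -> Permutation D (Box A :: D') ->
    GrzSeq (boxes Pi ++ [Box (Imp A (Box A))]) [A] -> GrzSeq G D.

Inductive rule : Type := Rinit | Rbot | RimpL | RimpR | Rrefl | Rbox.

(* A node: its sequent, the rule applied, and the list of premises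
   (for Rbox: first child = left premise, second child = right premise). *)
CoInductive ptree : Type :=
| node : sequent -> rule -> list ptree -> ptree.

Definition seq_of (t : ptree) : sequent := match t with node s _ _ => s end.
Definition rule_of (t : ptree) : rule := match t with node _ r _ => r end.
Definition children (t : ptree) : list ptree := match t with node _ _ c => c end.

Definition seq_perm (s : sequent) (G D : list form) : Prop :=
  Permutation (fst s) G /\ Permutation (snd s) D.

Definition local_ok (t : ptree) : Prop :=
  let '(G, D) := seq_of t in
  match rule_of t with
  | Rinit => children t = [] /\
      exists p G' D', Permutation G (Var p :: G') /\ Permutation D (Var p :: D')
  | Rbot => children t = [] /\ exists G', Permutation G (Bot :: G')
  | RimpL => exists t1 t2 A B G', children t = [t1; t2] /\
      Permutation G (Imp A B :: G') /\
      seq_perm (seq_of t1) (B :: G') D /\ seq_perm (seq_of t2) G' (A :: D)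
  | RimpR => exists t1 A B D', children t = [t1] /\
      Permutation D (Imp A B :: D') /\ seq_perm (seq_of t1) (A :: G) (B :: D')
  | Rrefl => exists t1 B G', children t = [t1] /\
      Permutation G (Box B :: G') /\ seq_perm (seq_of t1) (B :: Box B :: G') D
  | Rbox => exists t1 t2 Pi A G' D', children t = [t1; t2] /\
      Permutation G (G' ++ boxes Pi) /\ Permutation D (Box A :: D') /\
      seq_perm (seq_of t1) (G' ++ boxes Pi) (A :: D') /\
      seq_perm (seq_of t2) (boxes Pi) [A]
  end.

CoInductive locally_correct : ptree -> Prop :=
| lc_intro : forall t, local_ok t ->
    (forall c, In c (children t) -> locally_correct c) -> locally_correct t.

Definition is_branch (t : ptree) (b : nat -> ptree) (d : nat -> nat) : Prop :=
  b 0 = t /\ forall n, nth_error (children (b n)) (d n) = Some (b (S n)).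

Definition branch_condition (t : ptree) : Prop :=
  forall b d, is_branch t b d ->
    forall N, exists n, N <= n /\ rule_of (b n) = Rbox /\ d n = 1.

Definition inf_proof (t : ptree) : Prop := locally_correct t /\ branch_condition t.

Definition GrzInf_provable (G D : list form) : Prop :=
  exists t, inf_proof t /\ seq_perm (seq_of t) G D.

From Stdlib Require Import List Permutation Morphisms.
From Stdlib Require Import Classical ClassicalEpsilon Lia.
Import ListNotations.

(* The infinite proof is translated top-down into a finite one, carrying an
   annotation K: the list of formulas A -> Box A for which a right premise of
   (Box) has been entered, while Box K is kept in the antecedent.  At a (Box)
   node for Box A there are two cases.  If A -> Box A is already in K, the left
   premise gives A, and Box (A -> Box A) turns A into Box A by (refl) and
   (->L).  Otherwise the right premise, with A -> Box A added to K, is exactly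
   the premise of (Box_Grz).  The translation terminates: along a branch the
   annotation grows at every right premise of (Box), hence infinitely often by
   the branch condition, yet it stays a duplicate-free list of formulas
   A -> Box A with A among the finitely many subformulas of the endsequent. *)

Lemma GrzSeq_perm G D G2 D2 :
  GrzSeq G D -> Permutation G G2 -> Permutation D D2 -> GrzSeq G2 D2.
Proof.
  intros H; revert G2 D2; induction H; intros G2 D2 HG HD.
  - apply gs_init with G' D' A; [rewrite <- HG | rewrite <- HD]; assumption.
  - apply gs_bot with G'; rewrite <- HG; assumption.
  - apply gs_impL with G' A B; [rewrite <- HG; assumption | auto | auto].
  - apply gs_impR with D' A B; [rewrite <- HD; assumption | auto].
  - apply gs_refl with G' B; [rewrite <- HG; assumption | auto].
  - apply gs_boxGrz with G' D' Pi A; [rewrite <- HG | rewrite <- HD | ]; assumption.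
Qed.

#[export] Instance GrzSeq_Permutation :
  Proper (@Permutation form ==> @Permutation form ==> iff) GrzSeq.
Proof.
  intros G G2 HG D D2 HD; split; intros H; eapply GrzSeq_perm; eauto; symmetry; assumption.
Qed.

Lemma GrzSeq_weakR G D X : GrzSeq G D -> GrzSeq G (X :: D).
Proof.
  intros H; revert X; induction H; intros X.
  - apply gs_init with G' (X :: D') A; [assumption | rewrite H0; apply perm_swap].
  - apply gs_bot with G'; assumption.
  - apply gs_impL with G' A B; [assumption | auto |].
    eapply GrzSeq_perm; [apply IHGrzSeq2 | reflexivity | apply perm_swap].
  - apply gs_impR with (X :: D') A B; [rewrite H; apply perm_swap |].
    eapply GrzSeq_perm; [apply IHGrzSeq | reflexivity | apply perm_swap].
  - apply gs_refl with G' B; auto.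
  - apply gs_boxGrz with G' (X :: D') Pi A; [assumption | rewrite H0; apply perm_swap | assumption].
Qed.

Lemma GrzSeq_seq_perm Ctx s G D :
  seq_perm s G D -> GrzSeq (Ctx ++ fst s) (snd s) -> GrzSeq (Ctx ++ G) D.
Proof. intros [HG HD]; now rewrite HG, HD. Qed.

Definition grz_imp (A : form) : form := Imp A (Box A).

Lemma GrzSeq_box_of_grz_hyp G D A :
  In (Box (grz_imp A)) G -> GrzSeq G (A :: D) -> GrzSeq G (Box A :: D).
Proof.
  intros Hin HA.
  destruct (in_split _ _ Hin) as (G1 & G2 & ->).
  rewrite <- Permutation_middle in *.
  apply gs_refl with (G1 ++ G2) (grz_imp A); [reflexivity |].
  apply gs_impL with (Box (grz_imp A) :: G1 ++ G2) A (Box A); [reflexivity | |].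
  - apply gs_init with (Box (grz_imp A) :: G1 ++ G2) D (Box A); reflexivity.
  - eapply GrzSeq_perm; [apply GrzSeq_weakR, HA | reflexivity | apply perm_swap].
Qed.

Lemma GrzSeq_local_rule Ctx t :
  rule_of t <> Rbox -> local_ok t ->
  (forall c, In c (children t) -> GrzSeq (Ctx ++ fst (seq_of c)) (snd (seq_of c))) ->
  GrzSeq (Ctx ++ fst (seq_of t)) (snd (seq_of t)).
Proof.
  destruct t as [[G D] r cs]; simpl; intros Hr Hok Hc.
  destruct r; cbn in Hok.
  - destruct Hok as (_ & p & G' & D' & HG & HD); rewrite HG, HD.
    apply gs_init with (Ctx ++ G') D' (Var p); [symmetry; apply Permutation_middle | reflexivity].
  - destruct Hok as (_ & G' & HG); rewrite HG.
    apply gs_bot with (Ctx ++ G'); symmetry; apply Permutation_middle.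
  - destruct Hok as (t1 & t2 & A & B & G' & -> & HG & H1 & H2); rewrite HG.
    apply gs_impL with (Ctx ++ G') A B; [symmetry; apply Permutation_middle | |].
    + rewrite Permutation_middle; apply GrzSeq_seq_perm with (seq_of t1); [assumption | apply Hc; simpl; auto].
    + apply GrzSeq_seq_perm with (seq_of t2); [assumption | apply Hc; simpl; auto].
  - destruct Hok as (t1 & A & B & D' & -> & HD & H1); rewrite HD.
    apply gs_impR with D' A B; [reflexivity |].
    rewrite Permutation_middle; apply GrzSeq_seq_perm with (seq_of t1); [assumption | apply Hc; simpl; auto].
  - destruct Hok as (t1 & B & G' & -> & HG & H1); rewrite HG.
    apply gs_refl with (Ctx ++ G') B; [symmetry; apply Permutation_middle |].
    eapply GrzSeq_perm; [| apply (Permutation_app_swap_app Ctx [B; Box B] G') | reflexivity].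
    apply GrzSeq_seq_perm with (seq_of t1); [assumption | apply Hc; simpl; auto].
  - contradiction.
Qed.

Fixpoint sub (f : form) : list form :=
  match f with
  | Imp A B => f :: sub A ++ sub B
  | Box A => f :: sub A
  | _ => [f]
  end.

Lemma sub_refl f : In f (sub f).
Proof. destruct f; simpl; auto. Qed.

Lemma sub_trans f g : In g (sub f) -> incl (sub g) (sub f).
Proof.
  induction f; simpl; intros Hg.
  - destruct Hg as [<- | []]; apply incl_refl.
  - destruct Hg as [<- | []]; apply incl_refl.
  - destruct Hg as [<- | [Hg | Hg]%in_app_or]; [apply incl_refl | |];
      intros x Hx; right; apply in_or_app; [left; exact (IHf1 Hg x Hx) | right; exact (IHf2 Hg x Hx)].
  - destruct Hg as [<- | Hg]; [apply incl_refl |]. intros x Hx; right; exact (IHf Hg x Hx).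
Qed.

Definition sub_closed (P : form -> Prop) : Prop :=
  (forall A B, P (Imp A B) -> P A /\ P B) /\ (forall A, P (Box A) -> P A).

Lemma sub_closed_flat_map_sub l : sub_closed (fun f => In f (flat_map sub l)).
Proof.
  assert (Hsub : forall f g, In f (flat_map sub l) -> In g (sub f) -> In g (flat_map sub l)).
  { intros f g (h & Hh & Hf)%in_flat_map Hg.
    apply in_flat_map; exists h; split; [assumption | exact (sub_trans h f Hf g Hg)]. }
  split.
  - intros A B HAB; split; apply (Hsub _ _ HAB); simpl; right; apply in_or_app;
      [left | right]; apply sub_refl.
  - intros A HA; apply (Hsub _ _ HA); simpl; right; apply sub_refl.
Qed.

Lemma Forall_In_flat_map_sub l : Forall (fun f => In f (flat_map sub l)) l.
Proof. apply Forall_forall; intros f Hf; apply in_flat_map; exists f; split; [assumption | apply sub_refl]. Qed.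

Lemma local_ok_children_Forall P t c :
  sub_closed P -> local_ok t ->
  Forall P (fst (seq_of t)) -> Forall P (snd (seq_of t)) -> In c (children t) ->
  Forall P (fst (seq_of c)) /\ Forall P (snd (seq_of c)).
Proof.
  intros [HImp HBox]; destruct t as [[G D] r cs]; simpl; intros Hok HG HD Hc.
  destruct r; cbn in Hok.
  - destruct Hok as [-> _]; destruct Hc.
  - destruct Hok as [-> _]; destruct Hc.
  - destruct Hok as (t1 & t2 & A & B & G' & -> & HG' & [H1 H1'] & [H2 H2']).
    rewrite HG' in HG; apply Forall_cons_iff in HG as [[HA HB]%HImp HG].
    destruct Hc as [<- | [<- | []]].
    + rewrite H1, H1'; auto.
    + rewrite H2, H2'; auto.
  - destruct Hok as (t1 & A & B & D' & -> & HD' & [H1 H1']).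
    rewrite HD' in HD; apply Forall_cons_iff in HD as [[HA HB]%HImp HD].
    destruct Hc as [<- | []]; rewrite H1, H1'; auto.
  - destruct Hok as (t1 & B & G' & -> & HG' & [H1 H1']).
    rewrite HG' in HG; apply Forall_cons_iff in HG as [HBB HG].
    destruct Hc as [<- | []]; rewrite H1, H1'; auto.
  - destruct Hok as (t1 & t2 & Pi & A & G' & D' & -> & HG' & HD' & [H1 H1'] & [H2 H2']).
    rewrite HG' in HG; rewrite HD' in HD.
    apply Forall_cons_iff in HD as [HA%HBox HD].
    destruct Hc as [<- | [<- | []]].
    + rewrite H1, H1'; auto.
    + rewrite H2, H2'; apply Forall_app in HG as [_ HPi]; auto.
Qed.

Lemma not_Acc_descending_chain {X : Type} (R : X -> X -> Prop) x :
  ~ Acc R x -> exists f : nat -> X, f 0 = x /\ forall n, R (f (S n)) (f n).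
Proof.
  intros Hx.
  assert (Hnext : forall y, ~ Acc R y -> {z | R z y /\ ~ Acc R z}).
  { intros y Hy; apply constructive_indefinite_description.
    apply NNPP; intros Hall; apply Hy; constructor; intros z Hz.
    apply NNPP; intros Hz'; apply Hall; eauto. }
  set (g := fix g (n : nat) : {y | ~ Acc R y} :=
    match n with
    | 0 => exist _ x Hx
    | S m => let (z, Hz) := Hnext _ (proj2_sig (g m)) in exist _ z (proj2 Hz)
    end).
  exists (fun n => proj1_sig (g n)); split; [reflexivity |].
  intros n; simpl; destruct (Hnext _ (proj2_sig (g n))) as [z Hz]; exact (proj1 Hz).
Qed.

Lemma unbounded_of_increasing_infinitely_often (h : nat -> nat) :
  (forall n, h n <= h (S n)) -> (forall N, exists n, N <= n /\ h n < h (S n)) ->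
  forall k, exists n, k <= h n.
Proof.
  intros Hmono Hinc.
  assert (Hle : forall n m, n <= m -> h n <= h m).
  { intros n m Hnm; induction Hnm; [lia | specialize (Hmono m); lia]. }
  induction k as [|k [n Hn]]; [exists 0; lia |].
  destruct (Hinc n) as (m & Hnm & Hm); exists (S m); specialize (Hle _ _ Hnm); lia.
Qed.

Inductive grz_step (U : list form) : ptree * list form -> ptree * list form -> Prop :=
| step_keep t c i K :
    nth_error (children t) i = Some c -> (rule_of t = Rbox -> i <> 1) ->
    grz_step U (c, K) (t, K)
| step_fresh t c K z :
    rule_of t = Rbox -> nth_error (children t) 1 = Some c -> ~ In z K -> In z U ->
    grz_step U (c, z :: K) (t, K).

Lemma grz_step_child U y x :
  grz_step U y x ->
  exists i, nth_error (children (fst x)) i = Some (fst y) /\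
    (rule_of (fst x) = Rbox -> i = 1 -> length (snd y) = S (length (snd x))).
Proof.
  destruct 1 as [t c i K Hc Hi | t c K z Hr Hc Hz HzU]; simpl.
  - exists i; split; [assumption | intros Hr Hi1; exfalso; exact (Hi Hr Hi1)].
  - exists 1; split; [assumption | reflexivity].
Qed.

Lemma grz_step_length_le U y x : grz_step U y x -> length (snd x) <= length (snd y).
Proof. destruct 1; simpl; lia. Qed.

Lemma grz_step_NoDup_incl U y x :
  grz_step U y x -> NoDup (snd x) -> incl (snd x) U -> NoDup (snd y) /\ incl (snd y) U.
Proof.
  destruct 1; simpl; intros Hnd Hincl; [split; assumption |].
  split; [constructor | apply incl_cons]; assumption.
Qed.

Lemma grz_step_Acc_root U t : branch_condition t -> Acc (grz_step U) (t, []).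
Proof.
  intros Hbc; apply NNPP; intros Hnacc.
  destruct (not_Acc_descending_chain _ _ Hnacc) as (f & Hf0 & Hf).
  destruct (choice _ (fun n => grz_step_child _ _ _ (Hf n))) as [d Hd].
  set (K := fun n => snd (f n)).
  assert (Hbranch : is_branch t (fun n => fst (f n)) d).
  { split; [now rewrite Hf0 | intros n; apply Hd]. }
  assert (Hann : forall n, NoDup (K n) /\ incl (K n) U).
  { induction n as [|n [Hnd Hincl]].
    - unfold K; rewrite Hf0; split; [constructor | intros ? []].
    - exact (grz_step_NoDup_incl _ _ _ (Hf n) Hnd Hincl). }
  assert (Hunb : forall k, exists n, k <= length (K n)).
  { apply unbounded_of_increasing_infinitely_often.
    - intros n; exact (grz_step_length_le _ _ _ (Hf n)).
    - intros N; destruct (Hbc _ _ Hbranch N) as (n & HNn & Hbox & Hdir).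
      exists n; split; [assumption |]. unfold K; rewrite (proj2 (Hd n) Hbox Hdir); lia. }
  destruct (Hunb (S (length U))) as [n Hn]; destruct (Hann n) as [Hnd Hincl].
  pose proof (NoDup_incl_length Hnd Hincl); lia.
Qed.

Lemma GrzSeq_of_annotated_tree SF :
  sub_closed (fun f => In f SF) ->
  forall p, Acc (grz_step (map grz_imp SF)) p -> locally_correct (fst p) ->
  Forall (fun f => In f SF) (fst (seq_of (fst p))) ->
  Forall (fun f => In f SF) (snd (seq_of (fst p))) ->
  GrzSeq (boxes (snd p) ++ fst (seq_of (fst p))) (snd (seq_of (fst p))).
Proof.
  intros Hclosed p Hacc; induction Hacc as [[t K] _ IH]; simpl; intros Hlc HG HD.
  destruct Hlc as [t Hok Hcorr].
  assert (IHc : forall c K', grz_step (map grz_imp SF) (c, K') (t, K) ->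
    GrzSeq (boxes K' ++ fst (seq_of c)) (snd (seq_of c))).
  { intros c K' Hstep.
    assert (Hc : In c (children t)) by (inversion Hstep; eapply nth_error_In; eassumption).
    destruct (local_ok_children_Forall _ _ _ Hclosed Hok HG HD Hc).
    apply (IH (c, K')); auto. }
  destruct (classic (rule_of t = Rbox)) as [Hbox | Hnbox].
  2: { apply GrzSeq_local_rule; [assumption.. |].
       intros c Hc; destruct (In_nth_error _ _ Hc) as [i Hi].
       apply IHc, step_keep with i; [assumption | contradiction]. }
  destruct t as [[G D] r cs]; simpl in *; subst r; cbn in Hok.
  destruct Hok as (t1 & t2 & Pi & A & G' & D' & -> & HG' & HD' & H1 & H2).
  rewrite HG', HD'.
  destruct (classic (In (grz_imp A) K)) as [Hold | Hfresh].
  - apply GrzSeq_box_of_grz_hyp; [apply in_or_app; left; apply in_map; assumption |].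
    apply GrzSeq_seq_perm with (seq_of t1); [assumption |].
    apply IHc, step_keep with 0; [reflexivity | discriminate].
  - assert (HA : In A SF).
    { rewrite HD' in HD; apply Forall_cons_iff in HD as [HA _]; exact (proj2 Hclosed A HA). }
    apply gs_boxGrz with G' D' (K ++ Pi) A; [| reflexivity |].
    + unfold boxes; rewrite map_app, <- app_assoc, (Permutation_app_comm G').
      reflexivity.
    + eapply GrzSeq_perm; [| | reflexivity].
      * apply GrzSeq_seq_perm with (Ctx := boxes (grz_imp A :: K)) (s := seq_of t2); [exact H2 |].
        apply IHc, step_fresh; [reflexivity | reflexivity | assumption | apply in_map, HA].
      * unfold boxes; simpl; rewrite map_app; apply Permutation_cons_append.
Qed.

Theorem theorem3p6 : forall (G D : list form),
  GrzInf_provable G D -> GrzSeq G D.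
Proof.
  intros G D (t & [Hlc Hbc] & HG & HD).
  set (SF := flat_map sub (fst (seq_of t) ++ snd (seq_of t))).
  pose proof (Forall_In_flat_map_sub (fst (seq_of t) ++ snd (seq_of t))) as Hroot.
  apply Forall_app in Hroot as [HGin HDin].
  pose proof (GrzSeq_of_annotated_tree SF (sub_closed_flat_map_sub _) (t, [])
    (grz_step_Acc_root _ t Hbc) Hlc HGin HDin) as Ht.
  simpl in Ht; now rewrite <- HG, <- HD.
Qed.
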